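(* Let $X$, $Z$ be topological vector spaces and $C\subseteq Z$ a nonempty closed convex cone with $C^-\neq\{0\}$. Assume that there exist a bounded set $B\subseteq Z$ and a neighborhood $V$ of $0$ in $Z$ with $V\subseteq B-C$. If $f:X\to\mathcal{F}(Z,C)$ is lower continuous at $x_0\in{\rm dom\,} f$, then $f$ is efficient at $x_0$.
   Context: $\mathcal{F}(Z,C)=\{A\subseteq Z\colon A=\operatorname{cl}(A+C)\}$ (empty set included); $C^-=\{z^*\in Z^*\colon z^*(z)\le0\ \forall z\in C\}$; ${\rm dom\,} f=\{x\colon f(x)\neq\emptyset\}$. A set is bounded if it is absorbed by every neighborhood of $0$. $f$ is lower continuous at $x_0$ iff for every $z_0\in f(x_0)$ and every neighborhood $V$ of $z_0$ there is a neighborhood $U$ of $x_0$ with $f(x)\cap V\neq\emptyset$ for all $x\in U$. $f$ is efficient at $x_0$ iff there exist a neighborhood $U$ of $x_0$ and a bounded set $B'\subseteq Z$ with $f(x)\cap B'\neq\emptyset$ for all $x\in U$. *)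

From HB Require Import structures.
From mathcomp Require Import all_boot all_order all_algebra.
From mathcomp Require Import all_classical all_reals all_analysis.
Set Implicit Arguments. Unset Strict Implicit. Unset Printing Implicit Defensive.
Import Order.TTheory GRing.Theory Num.Theory.
Local Open Scope classical_set_scope.
Local Open Scope ring_scope.

Section Defs.
Variable R : realType.

Definition set_add (Z : lmodType R) (A C : set Z) : set Z :=
  [set a + c | a in A & c in C].
Definition set_sub (Z : lmodType R) (A C : set Z) : set Z :=
  [set a - c | a in A & c in C].

Definition is_convex_set (Z : lmodType R) (C : set Z) : Prop :=
  forall x y t, C x -> C y -> 0 <= t -> t <= 1 -> C (t *: x + (1 - t) *: y).
Definition is_cone (Z : lmodType R) (C : set Z) : Prop :=
  forall t z, 0 <= t -> C z -> C (t *: z).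

Definition is_cont_linear_functional (Z : topologicalLmodType R) (g : Z -> R) : Prop :=
  (forall (a : R) (x y : Z), g (a *: x + y) = a * g x + g y) /\ continuous (g : Z -> R^o).

Definition polar_cone (Z : topologicalLmodType R) (C : set Z) : set (Z -> R) :=
  [set g | is_cont_linear_functional g /\ forall z, C z -> g z <= 0].

Definition tvs_bounded (Z : topologicalLmodType R) (B : set Z) : Prop :=
  forall U : set Z, nbhs (0 : Z) U ->
    exists s : R, 0 < s /\ forall t : R, s < t -> B `<=` [set t *: u | u in U].

Definition in_FZC (Z : topologicalLmodType R) (C : set Z) (A : set Z) : Prop :=
  A = closure (set_add A C).

Definition lower_continuous_at (X Z : topologicalLmodType R)
  (f : X -> set Z) (x0 : X) : Prop :=
  forall z0, f x0 z0 -> forall W : set Z, nbhs z0 W ->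
    exists U : set X, nbhs x0 U /\ forall x, U x -> f x `&` W !=set0.

Definition efficient_at (X Z : topologicalLmodType R)
  (f : X -> set Z) (x0 : X) : Prop :=
  exists U : set X, exists B' : set Z,
    nbhs x0 U /\ tvs_bounded B' /\ forall x, U x -> f x `&` B' !=set0.

End Defs.

From HB Require Import structures.
From mathcomp Require Import all_boot all_order all_algebra.
From mathcomp Require Import all_classical all_reals all_analysis.
Set Implicit Arguments. Unset Strict Implicit. Unset Printing Implicit Defensive.
Import Order.TTheory GRing.Theory Num.Theory.
Local Open Scope classical_set_scope.
Local Open Scope ring_scope.

(* Take z0 in f x0 and the neighborhood z0 + V of z0.  Lower continuity gives a
   neighborhood U of x0 such that every f x, x in U, contains some
   w = z0 + b - c with b in B and c in C; since f x absorbs C, it also contains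
   w + c = z0 + b.  Hence f x meets the bounded set z0 + B for all x in U. *)

Section TopologicalLmodule.
Variables (R : realType) (Z : topologicalLmodType R).

Lemma nbhs0_split_add (U : set Z) : nbhs 0 U ->
  exists U1 U2 : set Z, [/\ nbhs 0 U1, nbhs 0 U2 &
    forall a b, U1 a -> U2 b -> U (a + b)].
Proof.
move=> U0; have := @add_continuous Z (0, 0) U; rewrite /= addr0 => /(_ U0).
case=> -[U1 U2] /= [U10 U20] sU; exists U1, U2; split=> // a b U1a U2b.
exact: (sU (a, b)).
Qed.

Lemma nbhs0_scaler_small (U : set Z) (z : Z) : nbhs 0 U ->
  exists2 e : R, 0 < e & forall r : R, `|r| < e -> U (r *: z).
Proof.
move=> U0; have := @scale_continuous R Z (0, z) U; rewrite /= scale0r => /(_ U0).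
case=> -[A B] /= [/nbhs_ballP[e e0 eA] Bz] sU; exists e => // r re.
apply: (sU (r, z)); split; last exact: nbhs_singleton.
by apply: eA; rewrite /ball /= sub0r normrN.
Qed.

Lemma nbhs_shift0 (V : set Z) (z0 : Z) : nbhs 0 V -> nbhs z0 [set w | V (w - z0)].
Proof.
move=> V0; have := @sub_continuous Z (z0, z0) V; rewrite /= subrr => /(_ V0).
case=> -[A1 A2] /= [A1z0 A2z0] sV; apply: filterS A1z0 => w A1w.
exact: (sV (w, z0) (conj A1w (nbhs_singleton A2z0))).
Qed.

(* A translate z + B lies in t U for t large: z / t is eventually in U1 and B
   in t U2, where U1 + U2 is contained in U. *)
Lemma tvs_bounded_translate (B : set Z) (z : Z) : tvs_bounded B ->
  tvs_bounded [set z + b | b in B].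
Proof.
move=> bB U U0.
have [U1 [U2 [U10 U20 sU]]] := nbhs0_split_add U0.
have [e e0 eU1] := nbhs0_scaler_small z U10.
have [s [s0 sB]] := bB U2 U20.
exists (Num.max s e^-1); split; first by rewrite lt_max s0.
move=> t; rewrite gt_max => /andP[st et] _ [b Bb <-].
have t0 : 0 < t by apply: lt_trans st.
have [u U2u <-] := sB t st b Bb.
exists (t^-1 *: z + u); last by rewrite scalerDr scalerA divff ?gt_eqF ?scale1r.
apply: sU U2u; apply: eU1.
by rewrite gtr0_norm ?invr_gt0 // -(invrK e) ltf_pV2 ?posrE ?invr_gt0.
Qed.

Lemma in_FZC_addr (C A : set Z) (w c : Z) : in_FZC C A -> A w -> C c -> A (w + c).
Proof. by move=> FA Aw Cc; rewrite FA; apply: subset_closure; exists w => //; exists c. Qed.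

Lemma in_FZC_meet_shift (C A B V : set Z) (z0 : Z) :
  in_FZC C A -> V `<=` set_sub B C -> A `&` [set w | V (w - z0)] !=set0 ->
  A `&` [set z0 + b | b in B] !=set0.
Proof.
move=> FA sV [w [Aw /sV[b Bb [c Cc bc]]]].
exists (w + c); split; first exact: in_FZC_addr FA Aw Cc.
have -> : w = z0 + b - c by rewrite -addrA bc addrC subrK.
by exists b => //; rewrite subrK.
Qed.

End TopologicalLmodule.

Theorem mainTheorem4 (R : realType) (X Z : topologicalLmodType R) (C : set Z)
  (f : X -> set Z) (x0 : X) :
  C !=set0 -> closed C -> is_convex_set C -> is_cone C ->
  (exists g, polar_cone C g /\ g <> (fun _ => 0)) ->
  (exists (B : set Z) (V : set Z),
      tvs_bounded B /\ nbhs (0 : Z) V /\ V `<=` set_sub B C) ->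
  (forall x, in_FZC C (f x)) ->
  f x0 !=set0 ->
  lower_continuous_at f x0 ->
  efficient_at f x0.
Proof.
move=> _ _ _ _ _ [B [V [bB [V0 sV]]]] Ff [z0 fz0] lcf.
have [U [U0 fU]] := lcf z0 fz0 _ (nbhs_shift0 z0 V0).
exists U, [set z0 + b | b in B]; split; first exact: U0.
split; first exact: tvs_bounded_translate.
by move=> x Ux; apply: in_FZC_meet_shift (Ff x) sV (fU x Ux).
Qed.
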